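(* Let $X,Y$ be metric spaces, $U\subset X$ and $V\subset Y$ open sets, and $\Psi:X\times X\rightrightarrows Y$ a set-valued mapping with closed graph, where either $X$ or $\operatorname{gr}\Psi$ is complete. Set $F(x)=\Psi(x,x)$. Let $0\le\ell<r$ and assume: (a) for every $u\in U$, every $x\in U$, every $v\in\Psi(x,u)$, every $t$ with $0<t<m(x)$ and every $y\in V$ with $d(y,v)<rt$, there is $x'$ with $d(x,x')\le r^{-1}d(y,v)$ and $y\in\Psi(x',u)$; (b) for every $x\in U$ and all $u,w\in U$: $\sup\{d(z,\Psi(x,w)) : z\in\Psi(x,u)\cap V\}\le \ell\,d(u,w)$. Then $F$ is Milyutin regular on $U\times V$ with $\operatorname{sur}_mF(U|V)\ge r-\ell$.
   Context: $m(x)=d(x,X\setminus U)$ ($d(x,\emptyset)=+\infty$). $B(A,s)=\{y:\exists a\in A,\ d(y,a)\le s\}$. $F$ is Milyutin regular on $U\times V$ if there is $r>0$ with $B(F(x),rt)\cap V\subset F(B(x,t))$ for all $x\in U$, $0\le t<m(x)$; $\operatorname{sur}_mF(U|V)$ is the supremum of such $r$ ($0$ if none). *)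

From Stdlib Require Import Reals.
Open Scope R_scope.

Definition is_metric {X : Type} (d : X -> X -> R) : Prop :=
  (forall x y, 0 <= d x y) /\
  (forall x y, d x y = 0 <-> x = y) /\
  (forall x y, d x y = d y x) /\
  (forall x y z, d x z <= d x y + d y z).

Definition seq_conv {X : Type} (d : X -> X -> R) (s : nat -> X) (l : X) : Prop :=
  forall eps, 0 < eps -> exists N, forall n, (N <= n)%nat -> d (s n) l < eps.

Definition seq_cauchy {X : Type} (d : X -> X -> R) (s : nat -> X) : Prop :=
  forall eps, 0 < eps -> exists N, forall n m, (N <= n)%nat -> (N <= m)%nat ->
    d (s n) (s m) < eps.

Definition complete {X : Type} (d : X -> X -> R) : Prop :=
  forall s, seq_cauchy d s -> exists l, seq_conv d s l.

Definition is_open {X : Type} (d : X -> X -> R) (U : X -> Prop) : Prop :=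
  forall x, U x -> exists e, 0 < e /\ forall y, d x y < e -> U y.

(** Set-valued mapping Psi : X x X ==> Y, represented by its graph relation
    [Psi x u y] meaning y \in Psi(x,u). *)

(** Closed graph (in the product metric space X x X x Y; closedness is
    sequential closedness, which is closedness in a metric space). *)
Definition closed_graph2 {X Y : Type} (dX : X -> X -> R) (dY : Y -> Y -> R)
  (Psi : X -> X -> Y -> Prop) : Prop :=
  forall (xs us : nat -> X) (ys : nat -> Y) x u y,
    (forall n, Psi (xs n) (us n) (ys n)) ->
    seq_conv dX xs x -> seq_conv dX us u -> seq_conv dY ys y ->
    Psi x u y.

(** The graph of Psi, as a metric subspace of X x X x Y (product metric),
    is complete: every Cauchy sequence of graph points converges to a
    graph point. *)
Definition complete_graph2 {X Y : Type} (dX : X -> X -> R) (dY : Y -> Y -> R)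
  (Psi : X -> X -> Y -> Prop) : Prop :=
  forall (xs us : nat -> X) (ys : nat -> Y),
    (forall n, Psi (xs n) (us n) (ys n)) ->
    seq_cauchy dX xs -> seq_cauchy dX us -> seq_cauchy dY ys ->
    exists x u y, Psi x u y /\
      seq_conv dX xs x /\ seq_conv dX us u /\ seq_conv dY ys y.

(** [lt_m d U x t] : t < m(x) where m(x) = d(x, X \ U) = inf {d(x,y) : y \notin U}
    (with inf of the empty set = +infinity).  Unfolded: t < inf S iff some
    s > t is a lower bound of S. *)
Definition lt_m {X : Type} (d : X -> X -> R) (U : X -> Prop) (x : X) (t : R) : Prop :=
  exists s, t < s /\ forall y, ~ U y -> s <= d x y.

(** [dist_set_le d A z c] : d(z, A) <= c, where d(z,A) = inf {d(z,a) : a \in A}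
    (= +infinity if A is empty).  Unfolded: inf S <= c iff for every eps > 0
    some element of S is < c + eps. *)
Definition dist_set_le {Y : Type} (d : Y -> Y -> R) (A : Y -> Prop) (z : Y) (c : R) : Prop :=
  forall eps, 0 < eps -> exists a, A a /\ d z a < c + eps.

Definition milyutin_with {X Y : Type} (dX : X -> X -> R) (dY : Y -> Y -> R)
  (F : X -> Y -> Prop) (U : X -> Prop) (V : Y -> Prop) (r : R) : Prop :=
  0 < r /\
  forall x t, U x -> 0 <= t -> lt_m dX U x t ->
    forall y, (exists v, F x v /\ dY y v <= r * t) -> V y ->
      exists x', dX x x' <= t /\ F x' y.

Definition milyutin_regular {X Y : Type} (dX : X -> X -> R) (dY : Y -> Y -> R)
  (F : X -> Y -> Prop) (U : X -> Prop) (V : Y -> Prop) : Prop :=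
  exists r, milyutin_with dX dY F U V r.

(** [sur_m_ge ... c] : sur_m F(U|V) >= c, where sur_m F(U|V) is the supremum
    of the admissible moduli r (0 if there is none).  Unfolded: sup S >= c
    (with sup of empty = 0) iff c <= 0 or every c' < c is exceeded by some
    element of S. *)
Definition sur_m_ge {X Y : Type} (dX : X -> X -> R) (dY : Y -> Y -> R)
  (F : X -> Y -> Prop) (U : X -> Prop) (V : Y -> Prop) (c : R) : Prop :=
  c <= 0 \/
  forall c', c' < c -> exists r, c' < r /\ milyutin_with dX dY F U V r.

From Stdlib Require Import Reals Lra Lia ClassicalEpsilon.
Open Scope R_scope.

(* Fix 0 < k < r - l and a ratio rho with l/r < rho < 1 - k/r.  Starting from
   x0 and v0 in F(x0) with d(y, v0) <= k t, alternate (a) and (b): (a) moves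
   x_n to x_{n+1} at distance <= d(y, v_n)/r with y in Psi(x_{n+1}, x_n), and
   (b) then finds v_{n+1} in F(x_{n+1}) with d(y, v_{n+1}) <= rho d(y, v_n).
   The steps decay geometrically, their total length is at most t (so the
   iterates stay in U), and a limit x of the Cauchy sequence (x_n) satisfies
   y in Psi(x, x) = F(x) by closedness of the graph. *)

Lemma iterate_choice {T : Type} (P : nat -> T -> Prop) (Q : nat -> T -> T -> Prop)
  (p0 : T) :
  P 0%nat p0 -> (forall n p, P n p -> exists p', Q n p p' /\ P (S n) p') ->
  exists s : nat -> T, s 0%nat = p0 /\ forall n, P n (s n) /\ Q n (s n) (s (S n)).
Proof.
  intros H0 Hstep.
  assert (Hnext : forall n p, exists p', P n p -> Q n p p' /\ P (S n) p').
  { intros n p. destruct (classic (P n p)) as [Hp | Hp].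
    - destruct (Hstep n p Hp) as [p' Hp']. exists p'. auto.
    - exists p. contradiction. }
  pose (next n p := proj1_sig (constructive_indefinite_description _ (Hnext n p))).
  assert (Hnext_spec : forall n p, P n p -> Q n p (next n p) /\ P (S n) (next n p))
    by (intros n p; exact (proj2_sig (constructive_indefinite_description _ (Hnext n p)))).
  exists (nat_rect (fun _ => T) p0 next). split; [reflexivity |].
  assert (HP : forall n, P n (nat_rect (fun _ => T) p0 next n))
    by (induction n; simpl; auto; apply Hnext_spec; auto).
  intro n. split; [auto | apply Hnext_spec; auto].
Qed.

Section MetricFacts.
Context {T : Type} (d : T -> T -> R) (Hd : is_metric d).

Lemma dist_ge0 x y : 0 <= d x y.
Proof. apply Hd. Qed.

Lemma dist_eq0 x y : d x y = 0 -> x = y.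
Proof. apply Hd. Qed.

Lemma dist_refl x : d x x = 0.
Proof. apply Hd. reflexivity. Qed.

Lemma dist_sym x y : d x y = d y x.
Proof. apply Hd. Qed.

Lemma dist_triangle x y z : d x z <= d x y + d y z.
Proof. apply Hd. Qed.

Lemma seq_conv_unique s a b : seq_conv d s a -> seq_conv d s b -> a = b.
Proof.
  intros Ha Hb. apply dist_eq0.
  destruct (Rle_lt_or_eq_dec _ _ (dist_ge0 a b)) as [Hab | Hab]; [| auto].
  destruct (Ha (d a b / 2)) as [Na HNa]; [lra |].
  destruct (Hb (d a b / 2)) as [Nb HNb]; [lra |].
  specialize (HNa (max Na Nb) (Nat.le_max_l _ _)).
  specialize (HNb (max Na Nb) (Nat.le_max_r _ _)).
  pose proof (dist_triangle a (s (max Na Nb)) b) as Htri.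
  rewrite (dist_sym a (s _)) in Htri. lra.
Qed.

Lemma seq_conv_shift s a : seq_conv d s a -> seq_conv d (fun n => s (S n)) a.
Proof.
  intros H eps Heps. destruct (H eps Heps) as [N HN].
  exists N. intros n Hn. apply HN. lia.
Qed.

Lemma seq_cauchy_shift s : seq_cauchy d s -> seq_cauchy d (fun n => s (S n)).
Proof.
  intros H eps Heps. destruct (H eps Heps) as [N HN].
  exists N. intros n m Hn Hm. apply HN; lia.
Qed.

Lemma seq_conv_const a : seq_conv d (fun _ => a) a.
Proof. intros eps Heps. exists 0%nat. intros. rewrite dist_refl. exact Heps. Qed.

Lemma seq_cauchy_const a : seq_cauchy d (fun _ => a).
Proof. intros eps Heps. exists 0%nat. intros. rewrite dist_refl. exact Heps. Qed.

Lemma dist_le_of_seq_conv s a x B :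
  seq_conv d s a -> (forall n, d x (s n) <= B) -> d x a <= B.
Proof.
  intros Hs HB. destruct (Rle_or_lt (d x a) B) as [H | H]; [exact H |].
  destruct (Hs (d x a - B)) as [N HN]; [lra |].
  specialize (HN N (le_n N)). pose proof (HB N). pose proof (dist_triangle x (s N) a).
  lra.
Qed.

Section Geometric.
Variables (s : nat -> T) (B rho : R).
Hypotheses (HB : 0 <= B) (Hrho0 : 0 <= rho) (Hrho1 : rho < 1).
Hypothesis Hstep : forall n, d (s n) (s (S n)) <= B * (1 - rho) * rho ^ n.

Lemma geometric_dist_bound n j : d (s n) (s (n + j)%nat) <= B * rho ^ n * (1 - rho ^ j).
Proof.
  induction j as [| j IH].
  - rewrite Nat.add_0_r, dist_refl. simpl. lra.
  - rewrite Nat.add_succ_r.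
    pose proof (dist_triangle (s n) (s (n + j)%nat) (s (S (n + j)))).
    pose proof (Hstep (n + j)). rewrite pow_add in *. simpl pow. nra.
Qed.

Lemma seq_cauchy_of_geometric : seq_cauchy d s.
Proof.
  assert (Htail : forall n m, (n <= m)%nat -> d (s n) (s m) <= B * rho ^ n).
  { intros n m Hnm. replace m with (n + (m - n))%nat by lia.
    pose proof (geometric_dist_bound n (m - n)).
    pose proof (pow_le rho n Hrho0). pose proof (pow_le rho (m - n) Hrho0).
    assert (0 <= B * rho ^ n) by (apply Rmult_le_pos; auto). nra. }
  intros eps Heps.
  destruct (pow_lt_1_zero rho ltac:(rewrite Rabs_right; lra) (eps / (B + 1)))
    as [N HN]; [apply Rdiv_lt_0_compat; lra |].
  assert (Hsmall : forall n, (N <= n)%nat -> B * rho ^ n < eps).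
  { intros n Hn. specialize (HN n Hn). rewrite Rabs_right in HN
      by (apply Rle_ge, pow_le; lra).
    apply Rmult_lt_compat_l with (r := B + 1) in HN; [| lra].
    replace ((B + 1) * (eps / (B + 1))) with eps in HN by (field; lra).
    pose proof (pow_le rho n Hrho0). nra. }
  exists N. intros n m Hn Hm. destruct (Nat.le_ge_cases n m) as [Hnm | Hmn].
  - eapply Rle_lt_trans; [apply Htail, Hnm | apply Hsmall, Hn].
  - rewrite dist_sym. eapply Rle_lt_trans; [apply Htail, Hmn | apply Hsmall, Hm].
Qed.

End Geometric.

Lemma lt_m_widen U x t : lt_m d U x t -> exists t', t < t' /\ lt_m d U x t'.
Proof.
  intros [s [Hts Hs]]. exists ((t + s) / 2).
  split; [lra | exists s; split; [lra | exact Hs]].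
Qed.

Lemma lt_m_mem U x x' t : lt_m d U x t -> d x x' <= t -> U x'.
Proof.
  intros [s [Hts Hs]] Hxx'. destruct (classic (U x')) as [Hx' | Hx']; [exact Hx' |].
  specialize (Hs x' Hx'). lra.
Qed.

Lemma lt_m_shift U x0 x t tau : lt_m d U x0 t -> d x0 x + tau <= t -> lt_m d U x tau.
Proof.
  intros [s [Hts Hs]] Hbudget. exists (s - d x0 x). split; [lra |].
  intros z Hz. specialize (Hs z Hz). pose proof (dist_triangle x0 x z). lra.
Qed.

End MetricFacts.

Lemma orbit_limit {X Y : Type} (dX : X -> X -> R) (dY : Y -> Y -> R)
  (HX : is_metric dX) (HY : is_metric dY) (Psi : X -> X -> Y -> Prop)
  (Hclosed : closed_graph2 dX dY Psi)
  (Hcomplete : complete dX \/ complete_graph2 dX dY Psi)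
  (xs : nat -> X) (y : Y) :
  seq_cauchy dX xs -> (forall n, Psi (xs (S n)) (xs n) y) ->
  exists x, seq_conv dX xs x /\ Psi x x y.
Proof.
  intros Hcauchy Horbit. destruct Hcomplete as [HXc | HGc].
  - destruct (HXc xs Hcauchy) as [x Hx]. exists x. split; [exact Hx |].
    apply (Hclosed (fun n => xs (S n)) xs (fun _ => y)); auto.
    + apply seq_conv_shift, Hx.
    + apply seq_conv_const, HY.
  - destruct (HGc (fun n => xs (S n)) xs (fun _ => y) Horbit
      (seq_cauchy_shift dX xs Hcauchy) Hcauchy (seq_cauchy_const dY HY y))
      as [x [u [y' [Hpsi [Hx [Hu Hy']]]]]].
    assert (y' = y)
      by (apply (seq_conv_unique dY HY (fun _ => y)); [exact Hy' | apply seq_conv_const, HY]).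
    assert (x = u)
      by (apply (seq_conv_unique dX HX (fun n => xs (S n))); [exact Hx | apply seq_conv_shift, Hu]).
    subst. exists u. auto.
Qed.

Section Descent.
Variables (X Y : Type) (dX : X -> X -> R) (dY : Y -> Y -> R).
Hypotheses (HX : is_metric dX) (HY : is_metric dY).
Variables (U : X -> Prop) (V : Y -> Prop) (Psi : X -> X -> Y -> Prop) (l r : R).
Hypotheses (Hl : 0 <= l) (Hlr : l < r).
Hypothesis Ha : forall u x v t y, U u -> U x -> Psi x u v ->
  0 < t -> lt_m dX U x t -> V y -> dY y v < r * t ->
  exists x', dX x x' <= / r * dY y v /\ Psi x' u y.
Hypothesis Hb : forall x u w, U x -> U u -> U w ->
  forall z, Psi x u z -> V z -> dist_set_le dY (Psi x w) z (l * dX u w).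

Lemma descent_step x v y c :
  U x -> Psi x x v -> V y -> lt_m dX U x (/ r * dY y v) -> l * (/ r * dY y v) < c ->
  exists x' v', dX x x' <= / r * dY y v /\ Psi x' x y /\ Psi x' x' v' /\ dY y v' < c.
Proof.
  intros Ux Hv Vy Hm Hc.
  assert (Hw : 0 <= / r * dY y v)
    by (apply Rmult_le_pos; [apply Rlt_le, Rinv_0_lt_compat; lra | apply dist_ge0, HY]).
  destruct (lt_m_widen dX U x _ Hm) as [t [Hwt Hmt]].
  destruct (Ha x x v t y Ux Ux Hv ltac:(lra) Hmt Vy) as [x' [Hxx' Hy]].
  { replace (dY y v) with (r * (/ r * dY y v)) by (field; lra).
    apply Rmult_lt_compat_l; lra. }
  assert (Ux' : U x') by exact (lt_m_mem dX U x x' _ Hm Hxx').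
  destruct (Hb x' x x' Ux' Ux Ux' y Hy Vy (c - l * (/ r * dY y v))) as [v' [Hv' Hyv']];
    [lra |].
  exists x', v'. repeat split; auto.
  assert (l * dX x x' <= l * (/ r * dY y v)) by (apply Rmult_le_compat_l; lra).
  lra.
Qed.

Lemma descent_sequence x0 v0 y t rho :
  U x0 -> Psi x0 x0 v0 -> V y -> 0 < t -> lt_m dX U x0 t ->
  l < rho * r -> rho < 1 -> dY y v0 <= r * (1 - rho) * t ->
  exists xs : nat -> X, xs 0%nat = x0 /\
    (forall n, dX (xs n) (xs (S n)) <= t * (1 - rho) * rho ^ n) /\
    (forall n, Psi (xs (S n)) (xs n) y).
Proof.
  intros Ux0 Hv0 Vy Ht Hm Hlrho Hrho1 Hv0y.
  assert (Hrho0 : 0 < rho) by nra.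
  pose (P n (p : X * Y) := Psi (fst p) (fst p) (snd p) /\
    dX x0 (fst p) <= t * (1 - rho ^ n) /\ dY y (snd p) <= r * (1 - rho) * t * rho ^ n).
  pose (Q n (p p' : X * Y) :=
    dX (fst p) (fst p') <= t * (1 - rho) * rho ^ n /\ Psi (fst p') (fst p) y).
  destruct (iterate_choice P Q (x0, v0)) as [s [Hs0 Hs]].
  - unfold P; simpl. rewrite (dist_refl dX HX). repeat split; auto; lra.
  - intros n [x v] [Hv [Hx Hy]]; simpl in *.
    set (q := rho ^ n) in *.
    assert (Hq : 0 < q) by (apply pow_lt; lra).
    assert (Hw : / r * dY y v <= t * (1 - rho) * q).
    { apply Rmult_le_reg_l with r; [lra |].
      rewrite <- Rmult_assoc, Rinv_r, Rmult_1_l by lra. nra. }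
    assert (Htq : 0 < t * rho * q) by (repeat apply Rmult_lt_0_compat; lra).
    assert (Ux : U x) by (apply (lt_m_mem dX U x0 x t Hm); nra).
    assert (Hmx : lt_m dX U x (/ r * dY y v)) by (apply (lt_m_shift dX HX U x0 x t _ Hm); nra).
    destruct (descent_step x v y (r * (1 - rho) * t * (rho * q)) Ux Hv Vy Hmx)
      as [x' [v' [Hxx' [Hy' [Hv' Hyv']]]]].
    { assert (0 < t * (1 - rho) * q) by (repeat apply Rmult_lt_0_compat; lra).
      assert (l * (/ r * dY y v) <= l * (t * (1 - rho) * q))
        by (apply Rmult_le_compat_l; lra).
      nra. }
    exists (x', v'). unfold Q, P; simpl. fold q.
    pose proof (dist_triangle dX HX x0 x x').
    repeat split; auto; nra.
  - exists (fun n => fst (s n)). rewrite Hs0. repeat split; auto; intro n; apply Hs.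
Qed.

Hypothesis Hclosed : closed_graph2 dX dY Psi.
Hypothesis Hcomplete : complete dX \/ complete_graph2 dX dY Psi.

Lemma milyutin_with_below_gap k :
  0 < k -> k < r - l -> milyutin_with dX dY (fun x => Psi x x) U V k.
Proof.
  intros Hk Hkl. split; [exact Hk |].
  intros x0 t Ux0 Ht Hm y [v0 [Hv0 Hyv0]] Vy.
  destruct (Rle_lt_or_eq_dec 0 t Ht) as [Htpos | <-].
  2: { assert (y = v0) by (apply (dist_eq0 dY HY); pose proof (dist_ge0 dY HY y v0); lra).
       subst. exists x0. rewrite (dist_refl dX HX). auto with real. }
  set (rho := (r + l - k) / (2 * r)).
  assert (Hrho : rho * r = (r + l - k) / 2) by (unfold rho; field; lra).
  assert (Hrho0 : 0 <= rho) by nra.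
  destruct (descent_sequence x0 v0 y t rho Ux0 Hv0 Vy Htpos Hm) as [xs [Hxs0 [Hgeo Horbit]]];
    [lra | nra | nra |].
  destruct (orbit_limit dX dY HX HY Psi Hclosed Hcomplete xs y) as [x [Hconv Hx]];
    [apply (seq_cauchy_of_geometric dX HX xs t rho); auto; nra | exact Horbit |].
  exists x. split; [| exact Hx].
  rewrite <- Hxs0. apply (dist_le_of_seq_conv dX HX xs); [exact Hconv |].
  intro n. pose proof (geometric_dist_bound dX HX xs t rho Hgeo 0 n) as Hn.
  simpl in Hn. pose proof (pow_le rho n Hrho0). nra.
Qed.

End Descent.

Theorem mainTheorem3
  (X Y : Type) (dX : X -> X -> R) (dY : Y -> Y -> R)
  (HX : is_metric dX) (HY : is_metric dY)
  (U : X -> Prop) (V : Y -> Prop)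
  (HU : is_open dX U) (HV : is_open dY V)
  (Psi : X -> X -> Y -> Prop)
  (Hclosed : closed_graph2 dX dY Psi)
  (Hcomplete : complete dX \/ complete_graph2 dX dY Psi)
  (l r : R) (Hl : 0 <= l) (Hlr : l < r)
  (Ha : forall u x v t y, U u -> U x -> Psi x u v ->
          0 < t -> lt_m dX U x t -> V y -> dY y v < r * t ->
          exists x', dX x x' <= / r * dY y v /\ Psi x' u y)
  (Hb : forall x u w, U x -> U u -> U w ->
          forall z, Psi x u z -> V z -> dist_set_le dY (Psi x w) z (l * dX u w)) :
  milyutin_regular dX dY (fun x => Psi x x) U V /\
  sur_m_ge dX dY (fun x => Psi x x) U V (r - l).
Proof.
  pose proof (milyutin_with_below_gap X Y dX dY HX HY U V Psi l r Hl Hlr Ha Hb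
    Hclosed Hcomplete) as Hk.
  split.
  - exists ((r - l) / 2). apply Hk; lra.
  - right. intros c Hc. exists ((Rmax c 0 + (r - l)) / 2).
    assert (Rmax c 0 < r - l) by (apply Rmax_lub_lt; lra).
    pose proof (Rmax_l c 0). pose proof (Rmax_r c 0).
    split; [lra | apply Hk; lra].
Qed.
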